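(* Let $a,b,c$ be positive integers such that $abc$ is not a cube in $\mathbb{Z}$. Then there exists $\lambda\in\{a/b,\,b/c,\,c/a\}$ such that $\mathbb{Q}(\sqrt[3]{abc})\neq\mathbb{Q}(\sqrt[3]{\lambda})$.
   Context: $\sqrt[3]{\cdot}$ denotes the real cube root, so these are subfields of $\mathbb{R}$. *)

From Stdlib Require Import Reals ZArith.
Open Scope R_scope.

Definition cbrt (x : R) : R :=
  match Rle_dec 0 x with
  | left _ => match Req_EM_T x 0 with
              | left _ => 0
              | right _ => Rpower x (/ 3)
              end
  | right _ => - Rpower (- x) (/ 3)
  end.

Definition is_subfield (S : R -> Prop) : Prop :=
  S 0 /\ S 1 /\
  (forall x y, S x -> S y -> S (x + y)) /\
  (forall x, S x -> S (- x)) /\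
  (forall x y, S x -> S y -> S (x * y)) /\
  (forall x, S x -> x <> 0 -> S (/ x)).

Definition Qadj (x : R) : R -> Prop :=
  fun y => forall S, is_subfield S -> S x -> S y.

From Stdlib Require Import Reals ZArith QArith Qreals Lra Lia Psatz Classical.
Open Scope R_scope.

(* Let t = cbrt (a b c) and beta = cbrt (a / b), and suppose Q(t) = Q(beta).
   Then beta lies in Q(t) = Q + Q t + Q t^2, and since beta^3 is rational,
   comparing the coefficients of 1, t, t^2 (which are linearly independent
   over Q because a b c is not a rational cube) in beta^3 shows that beta is
   s, s t or s t^2 for some rational s.  In the first case Q(beta) = Q, which
   cannot contain the irrational t; if beta = s t then b / c = (b s)^3, and if
   beta = s t^2 then c / a = (s b c)^3, so the corresponding cube root is
   rational and generates Q rather than Q(t). *)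

Definition rational (x : R) : Prop := exists q : Q, x = Q2R q.

Lemma rational_IZR z : rational (IZR z).
Proof. exists (inject_Z z). unfold Q2R; simpl. field. Qed.

Lemma rational_plus x y : rational x -> rational y -> rational (x + y).
Proof. intros [a ->] [b ->]. exists (a + b)%Q. now rewrite Q2R_plus. Qed.

Lemma rational_opp x : rational x -> rational (- x).
Proof. intros [a ->]. exists (- a)%Q. now rewrite Q2R_opp. Qed.

Lemma rational_minus x y : rational x -> rational y -> rational (x - y).
Proof. intros; apply rational_plus; auto using rational_opp. Qed.

Lemma rational_mult x y : rational x -> rational y -> rational (x * y).
Proof. intros [a ->] [b ->]. exists (a * b)%Q. now rewrite Q2R_mult. Qed.

Lemma rational_inv x : rational x -> x <> 0 -> rational (/ x).
Proof.
  intros [a ->] Ha. exists (/ a)%Q. symmetry. apply Q2R_inv.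
  intros E. apply Ha. rewrite (Qeq_eqR _ _ E). unfold Q2R; simpl. ring.
Qed.

Lemma rational_div x y : rational x -> rational y -> y <> 0 -> rational (x / y).
Proof. intros; apply rational_mult; auto using rational_inv. Qed.

Lemma rational_pow x k : rational x -> rational (x ^ k).
Proof. intros Hx. induction k; [apply (rational_IZR 1) | now apply rational_mult]. Qed.

#[local] Hint Resolve rational_IZR rational_plus rational_opp rational_minus
  rational_mult rational_div rational_pow : rational.

Lemma rational_subfield : is_subfield rational.
Proof. repeat split; auto using rational_inv with rational. Qed.

Lemma rational_of_lin p q x : rational p -> rational q -> q <> 0 -> q * x = p -> rational x.
Proof.
  intros Hp Hq Hq0 E. replace x with (p / q) by (rewrite <- E; field; auto).
  auto with rational.
Qed.

Definition rat_cube (x : R) : Prop := exists s, rational s /\ x = s ^ 3.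

Lemma Zdivide_cube_coprime u v : Z.gcd u v = 1%Z -> (v | u * u * u)%Z -> (v | 1)%Z.
Proof.
  intros Huv Hd. rewrite Z.gcd_comm in Huv.
  rewrite <- Z.mul_assoc in Hd. apply Z.gauss in Hd; auto. apply Z.gauss in Hd; auto.
  rewrite <- Huv. apply Z.gcd_greatest; auto using Z.divide_refl.
Qed.

Lemma Zcube_of_rat_cube (N u v : Z) : (0 < v)%Z -> (N * (v * v * v) = u * u * u)%Z ->
  exists z, (z * z * z = N)%Z.
Proof.
  intros Hv E.
  set (g := Z.gcd u v).
  assert (Hg : (0 < g)%Z).
  { assert (g <> 0)%Z by (intros G; apply Z.gcd_eq_0 in G; lia).
    pose proof (Z.gcd_nonneg u v). lia. }
  destruct (Z.gcd_divide_l u v) as [u' Hu], (Z.gcd_divide_r u v) as [v' Hv'].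
  fold g in Hu, Hv'.
  assert (Hcop : Z.gcd u' v' = 1%Z).
  { replace u' with (u / g)%Z by (rewrite Hu, Z.div_mul; lia).
    replace v' with (v / g)%Z by (rewrite Hv', Z.div_mul; lia).
    apply Z.gcd_div_gcd; lia. }
  assert (E' : (N * (v' * v' * v') = u' * u' * u')%Z).
  { apply (Z.mul_reg_l _ _ (g * g * g)); [nia |]. rewrite Hu, Hv' in E. lia. }
  assert (Hd : (v' | u' * u' * u')%Z) by (exists (N * v' * v')%Z; lia).
  apply Zdivide_cube_coprime in Hd; auto.
  apply Z.divide_1_r in Hd. exists u'. nia.
Qed.

Lemma Zcube_of_IZR_rat_cube (N : Z) : rat_cube (IZR N) -> exists z, (z * z * z = N)%Z.
Proof.
  intros [s [[[u v] ->] E]]. apply (Zcube_of_rat_cube N u (Z.pos v)); [lia |].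
  apply eq_IZR. rewrite !mult_IZR, E. unfold Q2R; simpl. field.
  apply not_0_IZR; lia.
Qed.

Lemma pow_eq_zero x k : x ^ k = 0 -> x = 0.
Proof. intros E. apply NNPP. intros Hx. exact (pow_nonzero x k Hx E). Qed.

Lemma cube_inj x y : x ^ 3 = y ^ 3 -> x = y.
Proof.
  intros H.
  assert (F : (x - y) * ((2 * x + y) ^ 2 + 3 * y ^ 2) = 0).
  { replace ((x - y) * _) with (4 * (x ^ 3 - y ^ 3)) by ring. lra. }
  apply Rmult_integral in F as [F | F]; [lra |].
  assert (Hy : y = 0) by (apply Rsqr_0_uniq; unfold Rsqr; nra).
  subst y. apply Rsqr_0_uniq; unfold Rsqr; nra.
Qed.

Lemma cbrt_cube x : cbrt x ^ 3 = x.
Proof.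
  assert (K : forall y, 0 < y -> Rpower y (/ 3) ^ 3 = y).
  { intros y Hy. rewrite <- Rpower_pow by apply exp_pos.
    rewrite Rpower_mult. replace (/ 3 * INR 3) with 1 by (simpl; field).
    now apply Rpower_1. }
  unfold cbrt. destruct (Rle_dec 0 x) as [Hx | Hx].
  - destruct (Req_EM_T x 0) as [-> | Hx0]; [ring | apply K; lra].
  - replace ((- Rpower (- x) (/ 3)) ^ 3) with (- Rpower (- x) (/ 3) ^ 3) by ring.
    rewrite K; lra.
Qed.

Lemma cbrt_pow3 x : cbrt (x ^ 3) = x.
Proof. apply cube_inj, cbrt_cube. Qed.

Lemma Qadj_self x : Qadj x x.
Proof. intros S _ Sx. exact Sx. Qed.

Definition rat_comb (t y : R) : Prop :=
  exists p q r, rational p /\ rational q /\ rational r /\ y = p + q * t + r * t ^ 2.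

Section PureCubicField.

Variables t n : R.
Hypothesis t_cube : t ^ 3 = n.
Hypothesis n_rational : rational n.
Hypothesis n_not_cube : ~ rat_cube n.

Lemma pure_cubic_irrational : ~ rational t.
Proof. intros Ht. apply n_not_cube. now exists t. Qed.

Lemma pure_cubic_n_neq0 : n <> 0.
Proof. intros ->. apply n_not_cube. exists 0. split; [apply rational_IZR | ring]. Qed.

Lemma rat_comb_eq0 p q r : rational p -> rational q -> rational r ->
  p + q * t + r * t ^ 2 = 0 -> p = 0 /\ q = 0 /\ r = 0.
Proof.
  intros Hp Hq Hr E.
  assert (Hr0 : r = 0).
  { apply NNPP; intros Hr0.
    (* multiplying the relation by [r t - q] eliminates [t ^ 2] *)
    assert (E2 : (r * p - q ^ 2) * t = p * q - r ^ 2 * n).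
    { rewrite <- t_cube.
      transitivity ((r * t - q) * (p + q * t + r * t ^ 2) + p * q - r ^ 2 * t ^ 3); [ring |].
      rewrite E. ring. }
    destruct (Req_dec (r * p - q ^ 2) 0) as [D | D].
    - apply n_not_cube. exists (q / r). split; [auto with rational |].
      apply (Rmult_eq_reg_l (r ^ 3)); [| now apply pow_nonzero].
      transitivity (r * (p * q)); [rewrite D in E2; nra |].
      replace p with (q ^ 2 / r) by (field_simplify_eq; auto; lra). field; auto.
    - apply pure_cubic_irrational.
      apply (rational_of_lin (p * q - r ^ 2 * n) (r * p - q ^ 2)); auto with rational. }
  subst r.
  assert (Hq0 : q = 0).
  { apply NNPP; intros Hq0. apply pure_cubic_irrational.
    apply (rational_of_lin (- p) q); auto with rational. lra. }
  subst q. repeat split; lra.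
Qed.

Lemma rat_comb_norm_neq0 p q r : rational p -> rational q -> rational r ->
  p + q * t + r * t ^ 2 <> 0 ->
  p ^ 3 + n * q ^ 3 + n ^ 2 * r ^ 3 - 3 * n * p * q * r <> 0.
Proof.
  intros Hp Hq Hr Hu N0.
  (* twice the norm is [p + q t + r t ^ 2] times this sum of squares *)
  assert (Hsq : (p - q * t) ^ 2 + (q * t - r * t ^ 2) ^ 2 + (r * t ^ 2 - p) ^ 2 = 0).
  { apply (Rmult_eq_reg_l (p + q * t + r * t ^ 2)); [| exact Hu].
    transitivity (2 * (p ^ 3 + n * q ^ 3 + n ^ 2 * r ^ 3 - 3 * n * p * q * r)).
    - rewrite <- t_cube. ring.
    - rewrite N0. ring. }
  pose proof (pow2_ge_0 (p - q * t)); pose proof (pow2_ge_0 (q * t - r * t ^ 2));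
    pose proof (pow2_ge_0 (r * t ^ 2 - p)).
  assert (E1 : q * t = p) by (apply Rminus_diag_uniq_sym, Rsqr_0_uniq; unfold Rsqr; nra).
  assert (E2 : r * t ^ 2 = p) by (apply Rminus_diag_uniq, Rsqr_0_uniq; unfold Rsqr; nra).
  assert (Hq0 : q <> 0) by (intros ->; apply Hu; lra).
  exact (pure_cubic_irrational (rational_of_lin p q t Hp Hq Hq0 E1)).
Qed.

Lemma rat_comb_subfield : is_subfield (rat_comb t).
Proof.
  repeat split.
  - exists 0, 0, 0. repeat split; auto with rational. ring.
  - exists 1, 0, 0. repeat split; auto with rational. ring.
  - intros x y [p [q [r [Hp [Hq [Hr ->]]]]]] [p' [q' [r' [Hp' [Hq' [Hr' ->]]]]]].
    exists (p + p'), (q + q'), (r + r'). repeat split; auto with rational. ring.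
  - intros x [p [q [r [Hp [Hq [Hr ->]]]]]].
    exists (- p), (- q), (- r). repeat split; auto with rational. ring.
  - intros x y [p [q [r [Hp [Hq [Hr ->]]]]]] [p' [q' [r' [Hp' [Hq' [Hr' ->]]]]]].
    exists (p * p' + n * (q * r' + r * q')), (p * q' + q * p' + n * (r * r')),
      (p * r' + q * q' + r * p').
    repeat split; auto with rational. rewrite <- t_cube. ring.
  - intros x [p [q [r [Hp [Hq [Hr ->]]]]]] Hu.
    set (N := p ^ 3 + n * q ^ 3 + n ^ 2 * r ^ 3 - 3 * n * p * q * r).
    assert (HN : N <> 0) by now apply rat_comb_norm_neq0.
    exists ((p ^ 2 - n * q * r) / N), ((n * r ^ 2 - p * q) / N), ((q ^ 2 - p * r) / N).
    assert (QN : rational N) by (unfold N; auto 10 with rational).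
    repeat split; auto with rational.
    assert (Hcof : (p + q * t + r * t ^ 2)
      * ((p ^ 2 - n * q * r) + (n * r ^ 2 - p * q) * t + (q ^ 2 - p * r) * t ^ 2) = N)
      by (unfold N; rewrite <- t_cube; ring).
    apply (Rmult_eq_reg_l (p + q * t + r * t ^ 2)); [| exact Hu].
    rewrite Rinv_r by exact Hu.
    transitivity (N / N); [field; exact HN |].
    rewrite <- Hcof at 1. field. exact HN.
Qed.

Lemma Qadj_rat_comb y : Qadj t y -> rat_comb t y.
Proof.
  intros Hy. apply Hy; [exact rat_comb_subfield |].
  exists 0, 1, 0. repeat split; auto with rational. ring.
Qed.

Lemma cube_coeffs_monomial p q r : rational q -> rational r ->
  p ^ 2 * q + n * q ^ 2 * r + n * p * r ^ 2 = 0 ->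
  p ^ 2 * r + p * q ^ 2 + n * q * r ^ 2 = 0 ->
  (q = 0 /\ r = 0) \/ (p = 0 /\ r = 0) \/ (p = 0 /\ q = 0).
Proof.
  intros Hq Hr E1 E2.
  pose proof pure_cubic_n_neq0 as Hn.
  destruct (Req_dec p 0) as [-> | Hp0].
  { assert (F : n * q ^ 2 * r = 0) by lra.
    apply Rmult_integral in F as [F | ->]; [| auto].
    apply Rmult_integral in F as [F | F]; [contradiction |].
    apply pow_eq_zero in F. auto. }
  destruct (Req_dec q 0) as [-> | Hq0].
  { assert (F : p ^ 2 * r = 0) by lra.
    apply Rmult_integral in F as [F | ->]; [| auto].
    now apply pow_eq_zero in F. }
  destruct (Req_dec r 0) as [-> | Hr0].
  { assert (F : p * q ^ 2 = 0) by lra.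
    apply Rmult_integral in F as [F | F]; [contradiction |].
    now apply pow_eq_zero in F. }
  exfalso. apply n_not_cube. exists (q / r). split; [auto with rational |].
  assert (F : p * q * (q ^ 3 - n * r ^ 3) = 0).
  { transitivity (q ^ 2 * (p ^ 2 * r + p * q ^ 2 + n * q * r ^ 2)
      - r * q * (p ^ 2 * q + n * q ^ 2 * r + n * p * r ^ 2)); [ring |].
    rewrite E1, E2. ring. }
  apply Rmult_integral in F as [F | F].
  - apply Rmult_integral in F as [F | F]; contradiction.
  - field_simplify_eq; [lra | exact Hr0].
Qed.

Lemma rat_comb_rat_cube_monomial b : rat_comb t b -> rational (b ^ 3) ->
  exists s, rational s /\ (b = s \/ b = s * t \/ b = s * t ^ 2).
Proof.
  intros [p [q [r [Hp [Hq [Hr ->]]]]]] Hb.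
  set (m := (p + q * t + r * t ^ 2) ^ 3) in Hb.
  destruct (rat_comb_eq0 (p ^ 3 + n * q ^ 3 + n ^ 2 * r ^ 3 + 6 * n * p * q * r - m)
    (3 * (p ^ 2 * q + n * q ^ 2 * r + n * p * r ^ 2))
    (3 * (p ^ 2 * r + p * q ^ 2 + n * q * r ^ 2))) as [_ [E1 E2]];
    [auto 10 with rational .. | unfold m; rewrite <- t_cube; ring |].
  destruct (cube_coeffs_monomial p q r Hq Hr) as [[-> ->] | [[-> ->] | [-> ->]]];
    [lra | lra | ..].
  - exists p. split; [auto | left; ring].
  - exists q. split; [auto | right; left; ring].
  - exists r. split; [auto | right; right; ring].
Qed.

End PureCubicField.

Lemma Qadj_cbrt_rat_cube_neq t lam : ~ rational t -> rat_cube lam ->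
  ~ (forall y, Qadj t y <-> Qadj (cbrt lam) y).
Proof.
  intros Ht [s [Hs ->]] E. apply Ht.
  assert (Hst : Qadj (cbrt (s ^ 3)) t) by apply (proj1 (E t)), Qadj_self.
  rewrite cbrt_pow3 in Hst. exact (Hst _ rational_subfield Hs).
Qed.

Lemma rat_cube_ratio_of_lin a b c s t : a <> 0 -> b <> 0 -> c <> 0 ->
  rational b -> rational s -> t ^ 3 = a * b * c -> (s * t) ^ 3 = a / b -> rat_cube (b / c).
Proof.
  intros Ha Hb Hc Qb Qs Ht E. exists (b * s). split; [auto with rational |].
  assert (Hs3 : s ^ 3 * (b ^ 2 * c) = 1).
  { transitivity ((s * t) ^ 3 * (b / a)); [rewrite Rpow_mult_distr, Ht; field; auto |].
    rewrite E. field. auto. }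
  replace ((b * s) ^ 3) with (b ^ 3 * (s ^ 3 * (b ^ 2 * c)) / (b ^ 2 * c)) by (field; auto).
  rewrite Hs3. field. auto.
Qed.

Lemma rat_cube_ratio_of_sq a b c s t : a <> 0 -> b <> 0 -> c <> 0 ->
  rational b -> rational c -> rational s -> t ^ 3 = a * b * c -> (s * t ^ 2) ^ 3 = a / b ->
  rat_cube (c / a).
Proof.
  intros Ha Hb Hc Qb Qc Qs Ht E. exists (s * b * c). split; [auto with rational |].
  assert (Hs3 : s ^ 3 * (a * b ^ 3 * c ^ 2) = 1).
  { transitivity ((s * t ^ 2) ^ 3 * (b / a)).
    - replace ((s * t ^ 2) ^ 3) with (s ^ 3 * (t ^ 3) ^ 2) by ring. rewrite Ht. field. auto.
    - rewrite E. field. auto. }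
  replace ((s * b * c) ^ 3) with (s ^ 3 * (a * b ^ 3 * c ^ 2) * c / a) by (field; auto).
  rewrite Hs3. field. auto.
Qed.

Theorem lemma4p5 (a b c : Z)
  (ha : (0 < a)%Z) (hb : (0 < b)%Z) (hc : (0 < c)%Z)
  (hnc : ~ exists z : Z, (z * z * z = a * b * c)%Z) :
  exists lam : R,
    (lam = IZR a / IZR b \/ lam = IZR b / IZR c \/ lam = IZR c / IZR a) /\
    ~ (forall y : R, Qadj (cbrt (IZR (a * b * c))) y <-> Qadj (cbrt lam) y).
Proof.
  set (n := IZR (a * b * c)). set (t := cbrt n). set (beta := cbrt (IZR a / IZR b)).
  assert (Ht : t ^ 3 = n) by apply cbrt_cube.
  assert (Qn : rational n) by apply rational_IZR.
  assert (Hn : ~ rat_cube n) by (intros H; apply hnc, Zcube_of_IZR_rat_cube, H).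
  assert (Htn : t ^ 3 = IZR a * IZR b * IZR c) by (rewrite Ht; unfold n; now rewrite !mult_IZR).
  assert (Ha : IZR a <> 0) by (apply not_0_IZR; lia).
  assert (Hb : IZR b <> 0) by (apply not_0_IZR; lia).
  assert (Hc : IZR c <> 0) by (apply not_0_IZR; lia).
  assert (Hirr := pure_cubic_irrational t n Ht Hn).
  destruct (classic (forall y, Qadj t y <-> Qadj beta y)) as [Heq | Hne];
    [| now exists (IZR a / IZR b); split; [left |]].
  assert (Hbeta : rat_comb t beta)
    by (apply (Qadj_rat_comb t n); auto; apply (proj2 (Heq beta)), Qadj_self).
  assert (Hbeta3 : beta ^ 3 = IZR a / IZR b) by apply cbrt_cube.
  destruct (rat_comb_rat_cube_monomial t n Ht Qn Hn beta Hbeta) as [s [Hs [E | [E | E]]]];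
    [rewrite Hbeta3; auto with rational | ..].
  - exfalso. apply (Qadj_cbrt_rat_cube_neq t (IZR a / IZR b) Hirr); [| exact Heq].
    exists s. split; [exact Hs | now rewrite <- E].
  - exists (IZR b / IZR c). split; [auto |].
    apply Qadj_cbrt_rat_cube_neq; [exact Hirr |].
    apply (rat_cube_ratio_of_lin (IZR a) _ _ s t); auto with rational. now rewrite <- E.
  - exists (IZR c / IZR a). split; [auto |].
    apply Qadj_cbrt_rat_cube_neq; [exact Hirr |].
    apply (rat_cube_ratio_of_sq _ (IZR b) _ s t); auto with rational. now rewrite <- E.
Qed.
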